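(* For every odd integer $d\ge 3$ there exists a generalized bicycle code with parameters $[[d^2+1,2,d]]$ which is $(2,4)$-regular. Moreover, for every such $d$ except $d=3$, this code is degenerate, having non-identity stabilizers of weight $4<d$.
   Context: For $a(x),b(x)\in R_n=\mathbb{F}_2[x]/\langle x^n-1\rangle$, the generalized bicycle (GB) code is the CSS code on $2n$ qubits whose X-check matrix $H_X$ has rows $x^i(a(x),b(x))$, $0\le i\le n-1$, and whose Z-check matrix $H_Z$ has rows $x^i(b(x^{-1}),a(x^{-1}))$ (vectors of $\mathbb{F}_2^{2n}$ written as pairs of polynomials, $x^{-1}=x^{n-1}$); its dimension is $2n-\mathrm{rank}H_X-\mathrm{rank}H_Z$ and its minimum distance is the minimum weight of a Pauli operator commuting with all stabilizers but not in the stabilizer group. The code is $(2,4)$-regular if every row of $H_X$ and $H_Z$ has weight 4 and every column has weight 2. A code of minimum distance $d$ is degenerate if its stabilizer group contains a non-identity element of weight less than $d$. $[[N,K,D]]$: $N$ physical qubits, $K$ logical qubits, distance $D$. *)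

From HB Require Import structures.
From mathcomp Require Import all_boot all_order all_algebra.
Set Implicit Arguments. Unset Strict Implicit. Unset Printing Implicit Defensive.
Import GRing.Theory.
Local Open Scope ring_scope.

Definition polyrow (n : nat) (p : {poly 'F_2}) : 'rV['F_2]_n :=
  \row_(j < n) (p %% ('X^n - 1))`_j.

(* x^{-1} = x^{n-1} in R_n : p(x^{-1}) is represented by p \Po x^(n-1). *)
Definition polyinv (n : nat) (p : {poly 'F_2}) : {poly 'F_2} :=
  p \Po 'X^(n.-1).

Definition GB_mx (n : nat) (a b : {poly 'F_2}) : 'M['F_2]_(n, n + n) :=
  \matrix_(i < n) row_mx (polyrow n ('X^i * a)) (polyrow n ('X^i * b)).

Definition GB_HX (n : nat) (a b : {poly 'F_2}) : 'M['F_2]_(n, n + n) :=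
  GB_mx n a b.

Definition GB_HZ (n : nat) (a b : {poly 'F_2}) : 'M['F_2]_(n, n + n) :=
  GB_mx n (polyinv n b) (polyinv n a).

Definition hwt (N : nat) (v : 'rV['F_2]_N) : nat := #|[set j | v 0 j != 0]|.

(* A Pauli operator on N qubits up to phase: X^u Z^v. Its weight is the
   number of qubits on which it acts non-trivially. *)
Definition pauli_wt (N : nat) (u v : 'rV['F_2]_N) : nat :=
  #|[set j | (u 0 j != 0) || (v 0 j != 0)]|.

(* CSS code with X-checks HX (X-type stabilizers X^h, h row of HX) and
   Z-checks HZ (Z-type stabilizers Z^g, g row of HZ). *)

Definition css_commutes (m1 m2 N : nat) (HX : 'M['F_2]_(m1, N))
  (HZ : 'M['F_2]_(m2, N)) (u v : 'rV['F_2]_N) : bool :=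
  (HZ *m u^T == 0) && (HX *m v^T == 0).

Definition css_in_stab (m1 m2 N : nat) (HX : 'M['F_2]_(m1, N))
  (HZ : 'M['F_2]_(m2, N)) (u v : 'rV['F_2]_N) : bool :=
  (u <= HX)%MS && (v <= HZ)%MS.

Definition css_dim (m1 m2 N : nat) (HX : 'M['F_2]_(m1, N))
  (HZ : 'M['F_2]_(m2, N)) : nat :=
  (N - \rank HX - \rank HZ)%N.

Definition css_min_distance (m1 m2 N : nat) (HX : 'M['F_2]_(m1, N))
  (HZ : 'M['F_2]_(m2, N)) (d : nat) : Prop :=
  (exists u v : 'rV['F_2]_N,
      [/\ css_commutes HX HZ u v, ~~ css_in_stab HX HZ u v & pauli_wt u v = d])
  /\ (forall u v : 'rV['F_2]_N,
      css_commutes HX HZ u v -> ~~ css_in_stab HX HZ u v -> (d <= pauli_wt u v)%N).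

Definition css_degenerate (m1 m2 N : nat) (HX : 'M['F_2]_(m1, N))
  (HZ : 'M['F_2]_(m2, N)) (d : nat) : Prop :=
  exists u v : 'rV['F_2]_N,
    [/\ css_in_stab HX HZ u v, (u != 0) || (v != 0) & (pauli_wt u v < d)%N].

Definition regular24 (m N : nat) (H : 'M['F_2]_(m, N)) : Prop :=
  (forall i, hwt (row i H) = 4%N) /\ (forall j, hwt ((col j H)^T) = 2%N).

Definition GB_regular24 (n : nat) (a b : {poly 'F_2}) : Prop :=
  regular24 (GB_HX n a b) /\ regular24 (GB_HZ n a b).

From mathcomp Require Import all_boot all_order all_algebra.
From mathcomp Require Import zify ring.
Set Implicit Arguments. Unset Strict Implicit. Unset Printing Implicit Defensive.
Import GRing.Theory.
Local Open Scope ring_scope.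

(* Take d = 2t + 1, n = (d^2 + 1)/2 = t d + t + 1 and the GB code of
   a = 1 + x, b = 1 + x^d.  Each check matrix is [A | B] with A, B circulant
   and a left kernel spanned by the all-ones vector, so K = 2n - 2(n - 1) = 2.
   A Z-operator (p, q) commuting with the X-checks satisfies
   p_i + p_{i+1} = q_i + q_{i+d}; with S the prefix sums of q this integrates to
   p_i = g + S_i + S_{i+d}.  If g = 0 and S_n = 0, (p, q) is the coboundary of
   S, i.e. a Z-stabilizer.  Otherwise telescoping shows that all n translates
   of one of two windows (t+1 consecutive q-positions plus t p-positions spaced
   by d, or t+1 p-positions spaced by d plus t consecutive q-positions) have
   odd overlap with the support; a point lies in at most t+1 translates and
   n = 2t(t+1) + 1, so the weight is at least 2t + 1 = d.  X-operators satisfy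
   the same relation after reversing x (x^-1 = x^(n-1)).  A logical X of weight
   d sits on {kd : k <= t} in the left block and {0, ..., t-1} in the right
   one; the weight-4 rows of H_X make the code degenerate once d > 3. *)

Lemma F2_cases (x : 'F_2) : x = 0 \/ x = 1.
Proof. case: x => [[|[|k]] lt_k2]; [left | right | by []]; exact: val_inj. Qed.

Ltac F2_enum := repeat (let x := fresh in move=> x; case: (F2_cases x) => ->; clear x).

Lemma F2_addrr (x : 'F_2) : x + x = 0.
Proof. by apply: addrr_pchar2; apply: pchar_Fp. Qed.

Lemma F2_eq_nat (x : 'F_2) : x = (x != 0)%:R.
Proof. by case: (F2_cases x) => ->. Qed.

Lemma F2_add_eq0 (x y : 'F_2) : (x + y == 0) = (x == y).
Proof. by move: x y; F2_enum. Qed.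

Lemma F2_oppmx p r (A : 'M['F_2]_(p, r)) : - A = A.
Proof. by apply/matrixP => i j; rewrite mxE oppr_pchar2 //; apply: pchar_Fp. Qed.

Lemma F2_addmxx p r (A : 'M['F_2]_(p, r)) : A + A = 0.
Proof. by rewrite -{1}(F2_oppmx A) addNr. Qed.

Lemma F2_telescope p r (F : nat -> 'M['F_2]_(p, r)) N :
  \sum_(k <- iota 0 N) (F k + F k.+1) = F 0%N + F N.
Proof.
by rewrite -(subn0 N) -/(index_iota 0 N) subn0 (@telescope_sumr_eq _ _ _ F) // => [|k _];
  rewrite F2_oppmx addrC.
Qed.

Section Periodic.
Variable n : nat.

Definition periodic (T : Type) (f : nat -> T) := forall k, f (k + n)%N = f k.

Lemma periodic_mulD (T : Type) (f : nat -> T) k l :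
  periodic f -> f (k + l * n)%N = f k.
Proof.
by move=> fP; elim: l => [|l IH]; rewrite ?addn0 // mulSnr addnA fP.
Qed.

Lemma periodic_mod (T : Type) (f : nat -> T) k : periodic f -> f (k %% n)%N = f k.
Proof. by move=> fP; rewrite [in RHS](divn_eq k n) addnC periodic_mulD. Qed.

Lemma big_periodic_shift (R : Type) (e : R) (op : Monoid.com_law e) (f : nat -> R) a :
  periodic f -> \big[op/e]_(0 <= i < n) f (i + a)%N = \big[op/e]_(0 <= i < n) f i.
Proof.
move=> fP; elim: a => [|a IH]; first by apply: eq_bigr => i _; rewrite addn0.
rewrite -IH; have [-> | n_gt0] := posnP n; first by rewrite !big_geq.
have -> : \big[op/e]_(0 <= i < n) f (i + a.+1)%N = \big[op/e]_(1 <= i < n.+1) f (i + a)%N.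
  by rewrite big_add1; apply: eq_bigr => i _; rewrite addnS.
by rewrite (big_ltn n_gt0) big_nat_recr //= addnC fP Monoid.mulmC.
Qed.

Lemma periodic_shift_const (T : Type) (f : nat -> T) c :
  periodic f -> coprime c n -> (forall k, f (k + c)%N = f k) -> forall k, f k = f 0.
Proof.
move=> fP cn fc; suff f1 k : f k.+1 = f k by elim=> // k <-.
have [c0 | c_gt0] := posnP c.
  by move: cn; rewrite c0 /coprime gcd0n => /eqP n1; rewrite -addn1 -n1 fP.
have fcl l j : f (j + l * c)%N = f j.
  by elim: l => [|l IH]; rewrite ?addn0 // mulSnr addnA fc IH.
case: (egcdnP n c_gt0) => km kn kmc _; move: kmc; rewrite (eqP cn) => kmc.
by rewrite -[in RHS](fcl km) kmc [(kn * n + 1)%N]addnC addnA addn1 periodic_mulD.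
Qed.

Definition nzcount (f : nat -> 'F_2) := (\sum_(0 <= i < n) (f i != 0%R : nat))%N.

Lemma nzcount_shift f a : periodic f -> nzcount (fun i => f (i + a)%N) = nzcount f.
Proof.
move=> fP; have := @big_periodic_shift nat 0%N addn (fun i => (f i != 0%R : nat)) a.
by apply => i /=; rewrite fP.
Qed.

(* Double counting: every translate meets a support, and each support point of
   [f] (resp. [g]) lies in [A] (resp. [B]) of the [n] translates. *)
Lemma nzcount_window_lb (f g : nat -> 'F_2) A B (a b : nat -> nat) :
  periodic f -> periodic g ->
  (forall j, \sum_(0 <= i < A) f (a i + j)%N + \sum_(0 <= i < B) g (b i + j)%N != 0) ->
  (n <= A * nzcount f + B * nzcount g)%N.
Proof.
move=> fP gP window_nz.
have nz_sum (h : nat -> 'F_2) C :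
    \sum_(0 <= i < C) h i != 0 -> (0 < \sum_(0 <= i < C) (h i != 0%R : nat))%N.
  apply: contraR; rewrite -eqn0Ngt sum_nat_seq_eq0 => /allP h0.
  by rewrite big1_seq // => i /h0 /=; rewrite eqb0 negbK => /eqP.
have hit j : (0 < \sum_(0 <= i < A) (f (a i + j)%N != 0%R : nat)
                 + \sum_(0 <= i < B) (g (b i + j)%N != 0%R : nat))%N.
  have := window_nz j.
  case: (eqVneq (\sum_(0 <= i < A) f (a i + j)%N) 0) => [-> | /nz_sum]; last by lia.
  by rewrite add0r => /nz_sum; lia.
have window_count (h : nat -> 'F_2) (c : nat -> nat) C : periodic h ->
    (\sum_(0 <= i < C) \sum_(0 <= j < n) (h (c i + j)%N != 0%R : nat))%N = (C * nzcount h)%N.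
  move=> hP; rewrite -[C in (C * _)%N]subn0 -sum_nat_const_nat; apply: eq_bigr => i _.
  by rewrite -(nzcount_shift (c i) hP); apply: eq_bigr => j _; rewrite addnC.
rewrite -(window_count f a A fP) -(window_count g b B gP).
rewrite (exchange_big_nat _ 0 A 0 n) (exchange_big_nat _ 0 B 0 n).
rewrite -big_split /= -[n in (n <= _)%N]subn0 -[(n - 0)%N]muln1 -sum_nat_const_nat.
by apply: leq_sum => j _; exact: hit.
Qed.

End Periodic.

Section Staircase.
Variable t : nat.
Local Notation d := t.*2.+1.
Local Notation n := (t * d + t).+1.
Variables p q : nat -> 'F_2.
Hypotheses (pP : periodic n p) (qP : periodic n q).
Hypothesis step : forall i, p i + p i.+1 + q i + q (i + d)%N = 0.

Let S k : 'F_2 := \sum_(0 <= i < k) q i.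

Let S_S k : S k.+1 = S k + q k.
Proof. by rewrite /S big_nat_recr. Qed.

Let S_D a b : S (a + b) = S a + \sum_(0 <= i < b) q (i + a)%N.
Proof.
elim: b => [|b IH]; first by rewrite addn0 big_geq // addr0.
by rewrite addnS S_S IH big_nat_recr //= addnC addrA.
Qed.

Let S_Dn a : S (a + n) = S a + S n.
Proof. by rewrite S_D (big_periodic_shift _ _ qP). Qed.

Let gamma : 'F_2 := p 0 + S d.

Let p_S i : p i = gamma + S i + S (i + d).
Proof.
elim: i => [|i IH].
  by rewrite /gamma /S [in X in _ + X + _]big_geq // addr0 -addrA F2_addrr addr0.
have /eqP := step i; rewrite (addrC (p i)) -!addrA F2_add_eq0 => /eqP ->.
by rewrite IH addSn (S_S i) (S_S (i + d)) /gamma; ring.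
Qed.

Let window_S j M : \sum_(0 <= i < M) q (i + j)%N = S j + S (j + M).
Proof. by rewrite S_D addrA F2_addrr add0r. Qed.

Let telescope N c :
  \sum_(0 <= k < N) p (k * d + c)%N = gamma *+ N + S c + S (N * d + c).
Proof.
elim: N => [|N IH]; first by rewrite big_geq // mul0n add0n mulr0n add0r F2_addrr.
rewrite big_nat_recr //= IH p_S mulrS.
have -> : (N * d + c + d = N.+1 * d + c)%N by rewrite mulSn; lia.
by move: gamma (gamma *+ N) (S c) (S (N * d + c)) (S (N.+1 * d + c)); F2_enum; apply/eqP.
Qed.

Let window_q_p j :
  \sum_(0 <= i < t.+1) q (i + j)%N + \sum_(0 <= k < t) p (k * d + t.+1 + j)%N
  = gamma *+ t + S n.
Proof.
under [X in _ + X]eq_bigr do rewrite -addnA.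
rewrite window_S telescope.
have -> : (t * d + (t.+1 + j) = j + n)%N by lia.
by rewrite S_Dn addnC; move: (S j) (S (t.+1 + j)) (gamma *+ t) (S n); F2_enum; apply/eqP.
Qed.

Let window_p_q j :
  \sum_(0 <= k < t.+1) p (k * d + j)%N + \sum_(0 <= i < t) q (i + j)%N
  = gamma *+ t.+1 + S n.
Proof.
rewrite window_S telescope.
have -> : (t.+1 * d + j = (j + t) + n)%N by rewrite mulSn; lia.
by rewrite S_Dn; move: (S j) (S (j + t)) (gamma *+ t.+1) (S n); F2_enum; apply/eqP.
Qed.

Lemma coboundary_or_weight_ge :
  (exists2 s, periodic n s & forall i, p i = s i + s (i + d)%N /\ q i = s i + s i.+1)
  \/ (d <= nzcount n p + nzcount n q)%N.
Proof.
have [/andP [/eqP g0 /eqP Sn0] | nz] := boolP ((gamma == 0) && (S n == 0)).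
  left; exists S => [k | i]; first by rewrite S_Dn Sn0 addr0.
  by rewrite p_S g0 add0r S_S addrA F2_addrr add0r.
right; have t_lb (wp wq : nat) :
    (n <= t.+1 * wp + t * wq)%N \/ (n <= t.+1 * wq + t * wp)%N -> (d <= wp + wq)%N.
  by nia.
apply: t_lb; have [w0 | w1] := eqVneq (gamma *+ t + S n) 0.
  left; apply: (@nzcount_window_lb n p q t.+1 t (fun k => k * d)%N id pP qP) => j /=.
  rewrite window_p_q mulrS -addrA w0 addr0.
  by apply: contra nz => /eqP g0; move: w0; rewrite g0 mul0rn add0r => ->; rewrite !eqxx.
right; apply: (@nzcount_window_lb n q p t.+1 t id (fun k => k * d + t.+1)%N qP pP) => j /=.
by rewrite window_q_p.
Qed.
End Staircase.

Lemma hwtE N (w : 'rV['F_2]_N) : hwt w = (\sum_j (w ord0 j != 0%R : nat))%N.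
Proof. by rewrite /hwt -sum1_card big_mkcond /=; apply: eq_bigr => j _; rewrite inE. Qed.

Lemma sum_row_F2 N (w : 'rV['F_2]_N) : \sum_j w 0 j = (hwt w)%:R.
Proof. by rewrite hwtE natr_sum; apply: eq_bigr => j _; exact: F2_eq_nat. Qed.

Lemma hwt_row_mx N1 N2 (w1 : 'rV['F_2]_N1) (w2 : 'rV['F_2]_N2) :
  hwt (row_mx w1 w2) = (hwt w1 + hwt w2)%N.
Proof.
by rewrite !hwtE big_split_ord; congr (_ + _)%N; apply: eq_bigr => j _;
  rewrite (row_mxEl, row_mxEr).
Qed.

Lemma hwt_hsubmx N1 N2 (w : 'rV['F_2]_(N1 + N2)) :
  hwt w = (hwt (lsubmx w) + hwt (rsubmx w))%N.
Proof. by rewrite -hwt_row_mx hsubmxK. Qed.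

Lemma pauli_wt0r N (u : 'rV['F_2]_N) : pauli_wt u 0 = hwt u.
Proof. by apply: eq_card => j; rewrite !inE mxE eqxx orbF. Qed.

Lemma hwt_le_pauli_wtl N (u v : 'rV['F_2]_N) : (hwt u <= pauli_wt u v)%N.
Proof. by apply/subset_leq_card/subsetP => j; rewrite !inE => ->. Qed.

Lemma hwt_le_pauli_wtr N (u v : 'rV['F_2]_N) : (hwt v <= pauli_wt u v)%N.
Proof. by apply/subset_leq_card/subsetP => j; rewrite !inE => ->; rewrite orbT. Qed.

Lemma hwt_gt0 N (w : 'rV['F_2]_N) : (0 < hwt w)%N -> w != 0.
Proof.
by apply: contraTneq => ->; rewrite -leqNgt hwtE big1 // => j _; rewrite mxE eqxx.
Qed.

Lemma hwt_deltas N (s : seq 'I_N) : uniq s -> hwt (\sum_(x <- s) delta_mx 0 x) = size s.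
Proof.
move=> s_uniq; rewrite /hwt -(card_uniqP s_uniq); apply: eq_card => j.
have entry x : (delta_mx 0 x : 'rV['F_2]_N) 0 j = (x == j : nat)%:R by rewrite mxE eq_sym.
rewrite in_set summxE (eq_bigr _ (fun x _ => entry x)).
rewrite -natr_sum -big_mkcondr sum1_count -/(count_mem j s) count_uniq_mem //.
by case: (j \in s); rewrite ?oner_eq0 ?eqxx.
Qed.

Lemma sum_mul_delta (R : semiRingType) (I : finType) (F : I -> R) (i : I) :
  \sum_j F j * (j == i)%:R = F i.
Proof.
by rewrite (bigD1 i) //= eqxx mulr1 big1 ?addr0 // => j /negbTE ->; rewrite mulr0.
Qed.

Lemma polyinv_1DXn n c : polyinv n (1 + 'X^c) = 1 + 'X^(n.-1 * c).
Proof. by rewrite /polyinv comp_polyD comp_polyC comp_Xn_poly -exprM. Qed.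

Section Circulant.
Variable m : nat.
Local Notation n := m.+1.

Definition cyc (w : 'rV['F_2]_n) (k : nat) : 'F_2 := w 0 (inZp k).

Lemma cyc_periodic w : periodic n (cyc w).
Proof. by move=> k; rewrite /cyc; congr (w 0 _); apply: val_inj; rewrite /= modnDr. Qed.

Lemma cyc_ord w (j : 'I_n) : cyc w j = w 0 j.
Proof. by rewrite /cyc valZpK. Qed.

Lemma inZp_modDl k l : inZp (k %% n + l) = inZp (k + l) :> 'I_n.
Proof. by apply: val_inj; rewrite /= modnDml. Qed.

Lemma hwt_nzcount w : hwt w = nzcount n (cyc w).
Proof. by rewrite hwtE /nzcount big_mkord; apply: eq_bigr => j _; rewrite cyc_ord. Qed.

Lemma inZp_shift_sym c c' (i j : 'I_n) : ((c + c') %% n = 0)%N ->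
  (j == inZp (i + c)) = (i == inZp (j + c')).
Proof.
have back (x y : 'I_n) e e' :
    ((e + e') %% n = 0)%N -> y = inZp (x + e) -> x = inZp (y + e').
  move=> ee' ->; apply: val_inj => /=.
  by rewrite modnDml -addnA -modnDmr ee' addn0 modn_small.
by move=> cc'; apply/eqP/eqP => /back; apply; rewrite // addnC.
Qed.

Definition circ (p : {poly 'F_2}) : 'M['F_2]_n := \matrix_(i < n) polyrow n ('X^i * p).

Lemma GB_mx_circ a b : GB_mx n a b = row_mx (circ a) (circ b).
Proof.
apply/matrixP => i j; rewrite mxE.
by case: (split_ordP j) => k ->; rewrite ?row_mxEl ?row_mxEr /circ mxE.
Qed.

Lemma modp_Xn_sub1 k : 'X^k %% ('X^n - 1 : {poly 'F_2}) = 'X^(k %% n).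
Proof.
rewrite {1}(divn_eq k n) exprD mulnC exprM -[X in X * _](subrK 1) subrX1.
rewrite mulrDl mul1r -mulrA mulrC modpD modp_mull add0r modp_small //.
by rewrite size_polyXn size_Xn_sub_1 // ltnS ltn_pmod.
Qed.

Lemma circ_1DXn c (i j : 'I_n) :
  circ (1 + 'X^c) i j = (j == i)%:R + (j == inZp (i + c))%:R.
Proof.
rewrite /circ !mxE mulrDr mulr1 -exprD modpD coefD !modp_Xn_sub1 !coefXn.
by rewrite (modn_small (ltn_ord i)) -!val_eqE.
Qed.

Lemma circ_mulmx_tr c w k :
  (circ (1 + 'X^c) *m w^T) (inZp k) 0 = cyc w k + cyc w (k + c).
Proof.
rewrite mxE; under eq_bigr do rewrite circ_1DXn mxE mulrDl !(mulrC _%:R).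
by rewrite big_split /= !sum_mul_delta inZp_modDl.
Qed.

Lemma mulmx_circ c c' g k : ((c + c') %% n = 0)%N ->
  cyc (g *m circ (1 + 'X^c)) k = cyc g k + cyc g (k + c').
Proof.
move=> cc'; rewrite /cyc mxE.
under eq_bigr do rewrite circ_1DXn (inZp_shift_sym _ _ cc') mulrDr eq_sym.
by rewrite big_split /= !sum_mul_delta inZp_modDl.
Qed.

Lemma circ_mul_trdelta c c' l : ((c + c') %% n = 0)%N ->
  circ (1 + 'X^c) *m (delta_mx 0 (inZp l))^T =
  delta_mx (inZp l) 0 + delta_mx (inZp (l + c')) 0 :> 'cV['F_2]_n.
Proof.
move=> cc'; rewrite trmx_delta -colE; apply/colP => i.
rewrite [LHS]mxE circ_1DXn (inZp_shift_sym _ _ cc') inZp_modDl.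
by rewrite !mxE !andbT !(eq_sym i).
Qed.

Lemma addn_negmod c : ((c + (n - c %% n)) %% n = 0)%N.
Proof. by rewrite -modnDml subnKC ?modnn // ltnW // ltn_pmod. Qed.

Lemma sum_mulmx_circ c (g : 'rV['F_2]_n) : \sum_j (g *m circ (1 + 'X^c)) 0 j = 0.
Proof.
set c' := (n - c %% n)%N.
under eq_bigr do rewrite -cyc_ord (mulmx_circ _ _ (addn_negmod c)).
rewrite big_split /= -(big_mkord xpredT (cyc g)).
rewrite -(big_mkord xpredT (fun j => cyc g (j + c'))).
by rewrite (big_periodic_shift _ _ (cyc_periodic g)); apply/eqP; rewrite F2_add_eq0.
Qed.

Lemma const_mulmx_circ c : (const_mx 1 : 'rV['F_2]_n) *m circ (1 + 'X^c) = 0.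
Proof.
apply/rowP => j; rewrite -cyc_ord (mulmx_circ _ _ (addn_negmod c)) /cyc !mxE.
exact: F2_addrr.
Qed.

Lemma circ_left_kernel c (g : 'rV['F_2]_n) :
  coprime c n -> g *m circ (1 + 'X^c) = 0 -> g = const_mx (g 0 0).
Proof.
move=> cn gc0; have shift_inv k : cyc g (k + c) = cyc g k.
  have /eqP := mulmx_circ g (k + c) (addn_negmod c).
  rewrite gc0 /cyc mxE eq_sym F2_add_eq0.
  have -> : inZp (k + c + (n - c %% n)) = inZp k :> 'I_n.
    by apply: val_inj; rewrite /= -addnA -modnDmr addn_negmod addn0.
  by move/eqP.
apply/rowP => j; rewrite mxE -cyc_ord -[g 0 0]cyc_ord.
exact: periodic_shift_const (cyc_periodic g) cn shift_inv j.
Qed.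

Lemma inZp_addn_neq (i : 'I_n) c : (c %% n != 0)%N -> i != inZp (i + c).
Proof.
apply: contra => /eqP /(congr1 val) /= i_eq.
have : (i + c == i + 0 %[mod n])%N by rewrite addn0 -i_eq modn_small.
by rewrite eqn_modDl mod0n.
Qed.

Lemma hwt_row_circ c i : (c %% n != 0)%N -> hwt (row i (circ (1 + 'X^c))) = 2.
Proof.
move=> c_nz.
have -> : row i (circ (1 + 'X^c)) = \sum_(x <- [:: i; inZp (i + c)]) delta_mx 0 x.
  apply/rowP => j; rewrite mxE circ_1DXn summxE !big_cons big_nil addr0 !mxE.
  by rewrite !(eq_sym j).
by rewrite hwt_deltas //= inE andbT inZp_addn_neq.
Qed.

Lemma hwt_col_circ c j : (c %% n != 0)%N -> hwt (col j (circ (1 + 'X^c)))^T = 2.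
Proof.
set c' := (n - c %% n)%N => c_nz.
have -> : (col j (circ (1 + 'X^c)))^T = \sum_(x <- [:: j; inZp (j + c')]) delta_mx 0 x.
  apply/rowP => i; rewrite 2![LHS]mxE circ_1DXn (inZp_shift_sym _ _ (addn_negmod c)).
  by rewrite summxE !big_cons big_nil addr0 !mxE !(eq_sym i).
rewrite hwt_deltas //= inE andbT inZp_addn_neq // /c' modn_small.
  by move: c_nz; lia.
by move: c_nz (ltn_pmod c (ltn0Sn m)); lia.
Qed.

End Circulant.

Section GeneralizedBicycle.
Variables m c1 c2 : nat.
Local Notation n := m.+1.
Local Notation H := (GB_mx n (1 + 'X^c1) (1 + 'X^c2)).

Lemma GB_mx_regular : (c1 %% n != 0)%N -> (c2 %% n != 0)%N -> regular24 H.
Proof.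
move=> c1_nz c2_nz; rewrite GB_mx_circ; split => [i | j].
  by rewrite row_row_mx hwt_row_mx !hwt_row_circ.
by case: (split_ordP j) => k ->; rewrite ?colKl ?colKr hwt_col_circ.
Qed.

Lemma GB_mx_syndrome v k : (H *m v^T) (inZp k) 0 =
  cyc (lsubmx v) k + cyc (lsubmx v) (k + c1) + (cyc (rsubmx v) k + cyc (rsubmx v) (k + c2)).
Proof. by rewrite GB_mx_circ -{1}[v]hsubmxK tr_row_mx mul_row_col mxE !circ_mulmx_tr. Qed.

Lemma sub_GB_mx c1' c2' v (s : nat -> 'F_2) :
  ((c1 + c1') %% n = 0)%N -> ((c2 + c2') %% n = 0)%N -> periodic n s ->
  (forall k, cyc (lsubmx v) k = s k + s (k + c1')%N) ->
  (forall k, cyc (rsubmx v) k = s k + s (k + c2')%N) -> (v <= H)%MS.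
Proof.
move=> c11' c22' sP vl vr; apply/submxP; exists (\row_(i < n) s i).
have cyc_s k : cyc (\row_(i < n) s i) k = s k by rewrite /cyc mxE periodic_mod.
rewrite GB_mx_circ mul_mx_row -[v]hsubmxK; congr row_mx; apply/rowP => j.
  by rewrite -!cyc_ord (mulmx_circ _ _ c11') vl !cyc_s.
by rewrite -!cyc_ord (mulmx_circ _ _ c22') vr !cyc_s.
Qed.

Lemma GB_mx_even_blocks v : (v <= H)%MS ->
  (hwt (lsubmx v))%:R = 0 :> 'F_2 /\ (hwt (rsubmx v))%:R = 0 :> 'F_2.
Proof.
case/submxP => g ->; rewrite GB_mx_circ mul_mx_row row_mxKl row_mxKr.
by rewrite -!sum_row_F2 !sum_mulmx_circ.
Qed.

Lemma rank_GB_mx : coprime c1 n || coprime c2 n -> \rank H = m.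
Proof.
move=> cop; set ones : 'rV['F_2]_n := const_mx 1.
have ker_const (g : 'rV_n) : g *m H = 0 -> g = g 0 0 *: ones.
  rewrite GB_mx_circ mul_mx_row => /eqP; rewrite row_mx_eq0 => /andP [/eqP g1 /eqP g2].
  suff {1}-> : g = const_mx (g 0 0) by apply/rowP => j; rewrite !mxE mulr1.
  by case/orP: cop => cop; [exact: circ_left_kernel cop g1 | exact: circ_left_kernel cop g2].
have ones_ker : (ones <= kermx H)%MS.
  by apply/sub_kermxP; rewrite GB_mx_circ mul_mx_row !const_mulmx_circ row_mx0.
have ker_ones : (kermx H <= ones)%MS.
  apply/row_subP => i; rewrite (ker_const (row i (kermx H))) ?scalemx_sub //.
  by rewrite -row_mul mulmx_ker row0.
have rank_ones : \rank ones = 1%N.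
  by rewrite rank_rV; case: eqP => // /rowP /(_ 0) /eqP; rewrite !mxE oner_eq0.
have := mxrankS ones_ker; have := mxrankS ker_ones; rewrite rank_ones mxrank_ker.
have := rank_leq_row H; lia.
Qed.

End GeneralizedBicycle.

Section OddDistanceCode.
Variable t : nat.
Hypothesis t_gt0 : (0 < t)%N.
Local Notation d := t.*2.+1.
Local Notation m := (t * d + t)%N.
Local Notation n := m.+1.
Local Notation HX := (GB_mx n (1 + 'X^1) (1 + 'X^d)).
Local Notation HZ := (GB_mx n (1 + 'X^(m * d)) (1 + 'X^(m * 1))).

Lemma GB_HZE : GB_HZ n (1 + 'X^1) (1 + 'X^d) = HZ.
Proof. by rewrite /GB_HZ !polyinv_1DXn. Qed.

Let negD x : ((x + m * x) %% n = 0)%N.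
Proof. by rewrite -mulSn modnMr. Qed.

Let negDr x : ((m * x + x) %% n = 0)%N.
Proof. by rewrite addnC negD. Qed.

Lemma Zlogical_weight_ge (v : 'rV['F_2]_(n + n)) :
  HX *m v^T = 0 -> ~~ (v <= HZ)%MS -> (d <= hwt v)%N.
Proof.
move=> Hv v_notin; set p := cyc (lsubmx v); set q := cyc (rsubmx v).
have step i : p i + p i.+1 + q i + q (i + d)%N = 0.
  by have := GB_mx_syndrome 1 d v i; rewrite Hv mxE addn1 addrA.
case: (coboundary_or_weight_ge (cyc_periodic _) (cyc_periodic _) step) => [[s sP ps] | ].
  case/negP: v_notin; apply: (sub_GB_mx (negDr d) (negDr 1) sP) => k.
    by case: (ps k).
  by rewrite addn1; case: (ps k).
by rewrite hwt_hsubmx !hwt_nzcount.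
Qed.

Lemma Xlogical_weight_ge (u : 'rV['F_2]_(n + n)) :
  HZ *m u^T = 0 -> ~~ (u <= HX)%MS -> (d <= hwt u)%N.
Proof.
move=> Hu u_notin; set q := cyc (lsubmx u); set r := cyc (rsubmx u).
(* As x^-1 = x^m, the H_Z-syndrome of u at i + d is the relation
   p_i + p_{i+1} = q_i + q_{i+d} for q the left block and p the right block
   shifted by d - 1. *)
pose p i := r (i + t.*2)%N.
have qP : periodic n q := cyc_periodic _.
have rP : periodic n r := cyc_periodic _.
have pP : periodic n p by move=> i; rewrite /p addnAC rP.
have step i : p i + p i.+1 + q i + q (i + d)%N = 0.
  have := GB_mx_syndrome (m * d) (m * 1) u (i + d); rewrite Hu mxE -/q -/r.
  have -> : (i + d + m * d = i + d * n)%N by rewrite -addnA -mulSn mulnC.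
  have -> : (i + d + m * 1 = i + t.*2 + n)%N by lia.
  have -> : r (i + d)%N = p i.+1 by rewrite /p addSn addnS.
  rewrite periodic_mulD // rP -/(p i) => E.
  by apply: etrans (esym E); ring.
case: (coboundary_or_weight_ge pP qP step) => [[s sP ps] | ]; last first.
  by rewrite hwt_hsubmx !hwt_nzcount -/q -/r addnC -(nzcount_shift t.*2 rP).
case/negP: u_notin.
have s'P : periodic n (fun k => s k.+1) by move=> k /=; rewrite -addSn sP.
apply: (sub_GB_mx (negD 1) (negD d) s'P) => k.
  by rewrite -/q; case: (ps k) => _ ->; rewrite muln1 -addnS sP addrC.
rewrite -/r; have -> : r k = p (k + m * d).+1.
  rewrite /p.
  have -> : ((k + m * d).+1 + t.*2 = k + d * n)%N by rewrite [(d * n)%N]mulnC mulSn; lia.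
  by rewrite periodic_mulD.
case: (ps (k + m * d).+1) => -> _.
have -> : ((k + m * d).+1 + d = k.+1 + d * n)%N by rewrite [(d * n)%N]mulnC mulSn; lia.
by rewrite addrC [s (k.+1 + _)]periodic_mulD.
Qed.

Let d_lt_n : (d < n)%N.
Proof. by rewrite ltnS -[X in (X <= _)%N]mul1n; move: t_gt0; nia. Qed.

Lemma HX_regular : regular24 HX.
Proof. by apply: GB_mx_regular; rewrite modn_small //; lia. Qed.

Lemma HZ_regular : regular24 HZ.
Proof.
apply: GB_mx_regular; last by rewrite muln1 modn_small //; lia.
apply/negP => /eqP md0; move: (negDr d).
by rewrite -modnDml md0 add0n modn_small.
Qed.

Lemma rank_HX : \rank HX = m.
Proof. by rewrite rank_GB_mx // coprime1n. Qed.

Lemma rank_HZ : \rank HZ = m.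
Proof. by rewrite rank_GB_mx // muln1 coprimenS orbT. Qed.

Definition xlogical : 'rV['F_2]_(n + n) :=
  row_mx (\sum_(x <- [seq inZp (k * d) | k <- iota 0 t.+1]) delta_mx 0 x)
         (\sum_(x <- [seq inZp i | i <- iota 0 t]) delta_mx 0 x).

Let hwt_xlogical_blocks :
  hwt (lsubmx xlogical) = t.+1 /\ hwt (rsubmx xlogical) = t.
Proof.
have kd_lt k : (k <= t)%N -> (k * d < n)%N.
  by move=> kt; rewrite ltnS (leq_trans (leq_mul kt (leqnn d))) ?leq_addr.
rewrite row_mxKl row_mxKr !hwt_deltas ?size_map ?size_iota //.
  rewrite map_inj_in_uniq ?iota_uniq // => i j; rewrite !mem_iota /= => ilt jlt.
  by move/(congr1 val); rewrite /= !modn_small //; lia.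
rewrite map_inj_in_uniq ?iota_uniq // => i j; rewrite !mem_iota /= => ilt jlt.
move/(congr1 val); rewrite /= !modn_small ?kd_lt // => /eqP.
by rewrite eqn_pmul2r // => /eqP.
Qed.

Lemma hwt_xlogical : hwt xlogical = d.
Proof.
by rewrite hwt_hsubmx; case: hwt_xlogical_blocks => -> ->; rewrite addSn addnn.
Qed.

Lemma HZ_xlogical : HZ *m xlogical^T = 0.
Proof.
rewrite GB_mx_circ tr_row_mx mul_row_col !linear_sum !big_map.
under eq_bigr do rewrite /= (circ_mul_trdelta _ (negDr d)) -mulSnr.
under [X in _ + X]eq_bigr do rewrite /= (circ_mul_trdelta _ (negDr 1)) addn1.
rewrite !F2_telescope.
have -> : inZp (t.+1 * d) = inZp t :> 'I_n.
  by apply: val_inj; rewrite /= -(modnDr t n); congr (_ %% _)%N; rewrite mulSn; lia.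
by rewrite mul0n F2_addmxx.
Qed.

Lemma xlogical_notin_HX : ~~ (xlogical <= HX)%MS.
Proof.
apply/negP => /GB_mx_even_blocks; case: hwt_xlogical_blocks => -> -> [].
by rewrite mulrS => + t0; rewrite t0 addr0 => /eqP; rewrite oner_eq0.
Qed.

Lemma code_min_distance : css_min_distance HX HZ d.
Proof.
split.
  exists xlogical, 0; split; last by rewrite pauli_wt0r hwt_xlogical.
    by rewrite /css_commutes HZ_xlogical trmx0 mulmx0 !eqxx.
  by rewrite /css_in_stab negb_and xlogical_notin_HX.
move=> u v /andP [/eqP Hu /eqP Hv].
rewrite /css_in_stab negb_and => /orP [u_notin | v_notin].
  exact: leq_trans (Xlogical_weight_ge Hu u_notin) (hwt_le_pauli_wtl u v).
exact: leq_trans (Zlogical_weight_ge Hv v_notin) (hwt_le_pauli_wtr u v).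
Qed.

Lemma HX_row_stabilizer i :
  [/\ css_in_stab HX HZ (row i HX) 0, row i HX != 0 & pauli_wt (row i HX) 0 = 4%N].
Proof.
have wt4 : hwt (row i HX) = 4%N by case: HX_regular => ->.
by rewrite /css_in_stab row_sub sub0mx pauli_wt0r wt4 hwt_gt0 ?wt4.
Qed.

End OddDistanceCode.

Theorem theorem4 (d : nat) :
  (3 <= d)%N -> odd d ->
  exists (n : nat) (a b : {poly 'F_2}),
    [/\ (n + n = d ^ 2 + 1)%N,
        css_dim (GB_HX n a b) (GB_HZ n a b) = 2%N,
        css_min_distance (GB_HX n a b) (GB_HZ n a b) d,
        GB_regular24 n a b
      & d <> 3%N ->
        css_degenerate (GB_HX n a b) (GB_HZ n a b) d /\
        (4 < d)%N /\
        exists u v : 'rV['F_2]_(n + n),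
          [/\ css_in_stab (GB_HX n a b) (GB_HZ n a b) u v,
              (u != 0%R) || (v != 0%R) & pauli_wt u v = 4%N]].
Proof.
move=> d_ge3 d_odd; have d_eq : d = (d./2).*2.+1 by rewrite -{1}(odd_double_half d) d_odd.
move: d./2 d_eq {d_odd} => t -> {d} in d_ge3 *; have t_gt0 : (0 < t)%N by lia.
exists (t * t.*2.+1 + t).+1, (1 + 'X^1), (1 + 'X^(t.*2.+1)).
rewrite /GB_regular24 /GB_HX GB_HZE; split.
- by rewrite -addnn; nia.
- by rewrite /css_dim rank_HX rank_HZ; lia.
- exact: code_min_distance.
- by split; [exact: HX_regular | exact: HZ_regular].
move=> d_ne3; have d_gt4 : (4 < t.*2.+1)%N by lia.
have [stab nz wt4] := HX_row_stabilizer t_gt0 0.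
by split; [|split=> //]; exists (row 0 (GB_mx _ (1 + 'X^1) (1 + 'X^(t.*2.+1)))), 0;
  rewrite ?nz ?wt4.
Qed.
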